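(* Let $a<b$ be real numbers and let $\gamma:[a,b]\to\mathbb{E}^2$ be a regular smooth parametric curve, i.e. $\gamma$ has a continuous derivative vector $\gamma'(t)$ on $[a,b]$ with $\gamma'(t)\neq0$ for all $t\in[a,b]$. For $t\in[a,b]$ let $L(t)$ be the length of the arc of $\gamma$ corresponding to parameter values in $[a,t]$. For $t\in(a,b)$ let $T(t)$ be the set of $\tau\in(a,t]$ such that the vector $\gamma'(\tau)$ is collinear to the vector $\gamma(t)-\gamma(a)$. Then $$\varlimsup_{t\to a}\frac{\sup\{L(\tau)\,:\,\tau\in T(t)\}}{L(t)}\ \geq\ \frac1e.$$
   Context: Any vector is considered collinear to the zero vector, so $T(t)=(a,t]$ when $\gamma(t)=\gamma(a)$. Derivatives at the endpoints $a$ and $b$ are one-sided. Limits at $a$ are right-hand limits. *)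

From Stdlib Require Import Reals.
From Coquelicot Require Import Coquelicot.
Open Scope R_scope.

Definition in_Icc (a b t : R) : Prop := a <= t <= b.

Definition has_deriv_on (a b : R) (f : R -> R) (t df : R) : Prop :=
  filterlim (fun s => (f s - f t) / (s - t))
    (within (fun s => in_Icc a b s /\ s <> t) (locally t)) (locally df).

Definition cont_on (a b : R) (g : R -> R) (t : R) : Prop :=
  filterlim g (within (in_Icc a b) (locally t)) (locally (g t)).

(* Collinearity of plane vectors u = (u1,u2), v = (v1,v2): linear dependence.
   (The zero vector is collinear to every vector.) *)
Definition collinear (u1 u2 v1 v2 : R) : Prop :=
  exists al be : R, (al <> 0 \/ be <> 0) /\ al * u1 + be * v1 = 0 /\ al * u2 + be * v2 = 0.

Definition arclen (dx dy : R -> R) (a t : R) : R :=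
  RInt (fun s => sqrt (dx s ^ 2 + dy s ^ 2)) a t.

Definition Tset (x y dx dy : R -> R) (a t tau : R) : Prop :=
  a < tau <= t /\ collinear (dx tau) (dy tau) (x t - x a) (y t - y a).

Definition supLT (x y dx dy : R -> R) (a t : R) : Rbar :=
  Lub_Rbar (fun r => exists tau, Tset x y dx dy a t tau /\ r = arclen dx dy a tau).

Definition limsup_right (f : R -> Rbar) (a b : R) : Rbar :=
  Glb_Rbar (fun s => exists delta, 0 < delta /\
     s = Lub_Rbar (fun r => exists t, a < t < Rmin b (a + delta) /\ Finite r = f t)).

(* Take coordinates (p, q) in the frame of the initial tangent, so that p increases near a and
   q = o(p). There the arc length is comparable to p up to a factor close to 1, so it suffices, for
   every c < 1/e, to find t arbitrarily close to a with a tangent at some xi <= t parallel to the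
   chord from gamma(a) to gamma(t) and p(xi) > c p(t).  If there is none, the gap between the
   tangent slope Q/P and the chord slope q/p never vanishes, so say it is positive.  As
   (q/p)' = (P/p) * gap, over a range where p grows by a factor > e the chord slope rises by more
   than the minimum of the gap and overtakes the tangent slope at the start of the range, which
   forces another parallel tangent.  So the gap stays bounded below near a, although both slopes tend
   to 0. *)

From Stdlib Require Import Reals Lra Ranalysis5 Classical.
From Coquelicot Require Import Coquelicot.
Open Scope R_scope.

Lemma continuity_pt_cst (c x : R) : continuity_pt (fun _ => c) x.
Proof. apply continuity_pt_const. now intros ? ?. Qed.

Lemma le_of_derive_nonneg F dF l r : l <= r ->
  (forall x, l < x < r -> is_derive F x (dF x)) ->
  (forall x, l <= x <= r -> continuity_pt F x) ->
  (forall x, l <= x <= r -> 0 <= dF x) -> F l <= F r.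
Proof.
  intros Hlr Hd Hc Hpos.
  destruct (MVT_gen F l r dF) as [z [Hz Hmvt]];
    rewrite ?Rmin_left, ?Rmax_right in * by lra; auto.
  specialize (Hpos z Hz). nra.
Qed.

Lemma lt_of_derive_pos F dF l r : l < r ->
  (forall x, l < x < r -> is_derive F x (dF x)) ->
  (forall x, l <= x <= r -> continuity_pt F x) ->
  (forall x, l <= x <= r -> 0 < dF x) -> F l < F r.
Proof.
  intros Hlr Hd Hc Hpos.
  destruct (MVT_gen F l r dF) as [z [Hz Hmvt]];
    rewrite ?Rmin_left, ?Rmax_right in * by lra; auto.
  specialize (Hpos z Hz). nra.
Qed.

Lemma Rabs_sub_le_of_derive F G dF dG l r : l <= r ->
  (forall x, l < x < r -> is_derive F x (dF x)) ->
  (forall x, l < x < r -> is_derive G x (dG x)) ->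
  (forall x, l <= x <= r -> continuity_pt F x) ->
  (forall x, l <= x <= r -> continuity_pt G x) ->
  (forall x, l <= x <= r -> Rabs (dG x) <= dF x) ->
  Rabs (G r - G l) <= F r - F l.
Proof.
  intros Hlr HdF HdG HcF HcG Hbound. apply Rabs_le.
  assert (F l - G l <= F r - G r).
  { apply (le_of_derive_nonneg (fun x => F x - G x) (fun x => dF x - dG x)); auto.
    - intros x Hx; exact (is_derive_minus F G x _ _ (HdF x Hx) (HdG x Hx)).
    - intros x Hx; apply continuity_pt_minus; auto.
    - intros x Hx; specialize (Hbound x Hx); apply Rabs_le_between in Hbound; lra. }
  assert (F l + G l <= F r + G r).
  { apply (le_of_derive_nonneg (fun x => F x + G x) (fun x => dF x + dG x)); auto.
    - intros x Hx; exact (is_derive_plus F G x _ _ (HdF x Hx) (HdG x Hx)).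
    - intros x Hx; apply continuity_pt_plus; auto.
    - intros x Hx; specialize (Hbound x Hx); apply Rabs_le_between in Hbound; lra. }
  lra.
Qed.

Lemma nonvanishing_pos_iff f l r : l <= r ->
  (forall x, l <= x <= r -> continuity_pt f x) ->
  (forall x, l <= x <= r -> f x <> 0) -> (0 < f l <-> 0 < f r).
Proof.
  intros Hlr Hc Hn.
  assert (f l <> 0) by (apply Hn; lra). assert (f r <> 0) by (apply Hn; lra).
  destruct (Req_dec l r) as [<-|Hne]; [tauto|].
  split; intros Hpos; apply Rnot_le_lt; intros Hneg.
  - destruct (IVT_interv (fun x => - f x) l r) as [z [Hz Hfz]]; try lra.
    + intros x Hx; apply continuity_pt_opp; auto.
    + apply (Hn z Hz); lra.
  - destruct (IVT_interv f l r Hc) as [z [Hz Hfz]]; try lra.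
    exact (Hn z Hz Hfz).
Qed.

Lemma continuity_pt_eps f x : continuity_pt f x -> forall e, 0 < e ->
  exists d, 0 < d /\ forall y, Rabs (y - x) < d -> Rabs (f y - f x) < e.
Proof.
  intros H e He. destruct (H e He) as [d [Hd Hfd]]. exists d; split; auto.
  intros y Hy. destruct (Req_dec y x) as [->|Hne].
  - rewrite Rminus_eq_0, Rabs_R0; auto.
  - apply (Hfd y). repeat split; auto.
Qed.

Lemma is_derive_continuity_pt f x l : is_derive f x l -> continuity_pt f x.
Proof.
  intros H. apply continuity_pt_filterlim, (ex_derive_continuous (V:=R_NormedModule)).
  now exists l.
Qed.

Lemma exp1_gt1 : 1 < exp 1.
Proof. rewrite <- exp_0 at 1. apply exp_increasing; lra. Qed.

Section ChordTangent.
Variables (a B c : R) (p q P Q : R -> R).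
Hypothesis HaB : a < B.
Hypothesis Hc : 0 < c.
Hypothesis Hce : c * exp 1 < 1.
Hypothesis Hp_cont : forall t, a <= t <= B -> continuity_pt p t.
Hypothesis Hq_cont : forall t, a <= t <= B -> continuity_pt q t.
Hypothesis HP_cont : forall t, a <= t <= B -> continuity_pt P t.
Hypothesis HQ_cont : forall t, a <= t <= B -> continuity_pt Q t.
Hypothesis Hp_der : forall t, a < t < B -> is_derive p t (P t).
Hypothesis Hq_der : forall t, a < t < B -> is_derive q t (Q t).
Hypothesis HP_pos : forall t, a <= t <= B -> 0 < P t.
Hypothesis Hpa : p a = 0.
Hypothesis Hqa : q a = 0.
Hypothesis HQa : Q a = 0.
Hypothesis Hno_parallel : forall t xi, a < t < B -> a < xi <= t -> c * p t < p xi ->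
  Q xi * p t <> q t * P xi.

Let slope t := Q t / P t.
Let chord t := q t / p t.
Let gap t := slope t - chord t.
Let mid := (a + B) / 2.
Let cm := (c + / exp 1) / 2.

Lemma cm_bounds : c < cm /\ cm < / exp 1 /\ cm < 1.
Proof.
  pose proof exp1_gt1. pose proof (Rinv_0_lt_compat _ (exp_pos 1)).
  assert (c < / exp 1).
  { apply (Rmult_lt_reg_r (exp 1)); [lra|]. rewrite Rinv_l; lra. }
  assert (/ exp 1 * exp 1 = 1) by (apply Rinv_l; lra).
  assert (/ exp 1 < 1) by nra.
  unfold cm; lra.
Qed.

Lemma ln_inv_cm_gt1 : 1 < ln (/ cm).
Proof.
  destruct cm_bounds as (Hccm & Hcme & _).
  rewrite <- (ln_exp 1) at 1. apply ln_increasing; [apply exp_pos|].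
  rewrite <- (Rinv_inv (exp 1)). apply Rinv_lt_contravar; [|lra].
  apply Rmult_lt_0_compat; [lra|]. apply Rinv_0_lt_compat, exp_pos.
Qed.

Lemma p_lt u v : a <= u -> u < v -> v <= B -> p u < p v.
Proof.
  intros. apply (lt_of_derive_pos p P); auto; intros; [apply Hp_der | apply Hp_cont | apply HP_pos]; lra.
Qed.

Lemma p_pos t : a < t <= B -> 0 < p t.
Proof. intros. rewrite <- Hpa. apply p_lt; lra. Qed.

Lemma slope_cont t : a <= t <= B -> continuity_pt slope t.
Proof. intros. apply continuity_pt_div; auto. specialize (HP_pos t H); lra. Qed.

Lemma gap_cont t : a < t <= B -> continuity_pt gap t.
Proof.
  intros. apply continuity_pt_minus; [apply slope_cont; lra|].
  apply continuity_pt_div; try (apply Hq_cont || apply Hp_cont); try lra.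
  specialize (p_pos t H); lra.
Qed.

Lemma parallel_of_slope_eq t xi : a < t <= B -> a <= xi <= B ->
  slope xi = chord t -> Q xi * p t = q t * P xi.
Proof.
  intros Ht Hxi Heq. pose proof (p_pos t Ht). pose proof (HP_pos xi Hxi).
  replace (Q xi) with (slope xi * P xi) by (unfold slope; field; lra).
  replace (q t) with (chord t * p t) by (unfold chord; field; lra).
  rewrite Heq; ring.
Qed.

Lemma gap_neq0 t : a < t < B -> gap t <> 0.
Proof.
  intros Ht Hgap. apply (Hno_parallel t t); try lra.
  - destruct cm_bounds as (Hccm & _ & Hcm1). pose proof (p_pos t ltac:(lra)). nra.
  - apply parallel_of_slope_eq; try lra. unfold gap in Hgap; lra.
Qed.

Lemma chord_derive t : a < t < B -> is_derive chord t (P t / p t * gap t).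
Proof.
  intros Ht. pose proof (p_pos t ltac:(lra)). pose proof (HP_pos t ltac:(lra)).
  replace (P t / p t * gap t) with ((Q t * p t - q t * P t) / p t ^ 2)
    by (unfold gap, slope, chord; field; lra).
  apply is_derive_div; auto. lra.
Qed.

Section PositiveGap.
Hypothesis Hgap_mid : 0 < gap mid.

Lemma gap_pos t : a < t < B -> 0 < gap t.
Proof.
  intros Ht. assert (Hnv : forall l r, a < l -> l <= r -> r < B -> (0 < gap l <-> 0 < gap r)).
  { intros l r Hl Hlr Hr. apply nonvanishing_pos_iff; auto; intros;
      [apply gap_cont | apply gap_neq0]; lra. }
  unfold mid in *. destruct (Rle_or_lt t ((a + B) / 2)).
  - apply (Hnv t ((a + B) / 2)); auto; lra.
  - apply (Hnv ((a + B) / 2) t); auto; lra.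
Qed.

Lemma chord_lt_slope t xi : a < t < B -> a < xi <= t -> c * p t < p xi -> chord t < slope xi.
Proof.
  intros Ht Hxi Hcp. set (f z := slope z - chord t).
  enough (0 < f xi) by (unfold f in *; lra).
  apply (nonvanishing_pos_iff f xi t); try lra.
  - intros z Hz. apply continuity_pt_minus; [apply slope_cont; lra | apply continuity_pt_cst].
  - intros z Hz Hfz. apply (Hno_parallel t z); try lra.
    + assert (p xi <= p z) by (destruct (Req_dec xi z) as [->|]; [lra | left; apply p_lt; lra]). lra.
    + apply parallel_of_slope_eq; try lra. unfold f in Hfz; lra.
  - exact (gap_pos t Ht).
Qed.

(* Where the gap attains its minimum [m], [chord - m * ln p] is nondecreasing; over a range where
   [p] grows by the factor [/ cm > e] the chord slope thus gains more than [m] and overtakes the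
   tangent slope, contradicting [chord_lt_slope]. *)
Lemma gap_minimizer_not_small t0 U : a < t0 -> t0 <= U -> U < B ->
  (forall z, t0 <= z <= U -> gap t0 <= gap z) -> cm * p U <= p t0.
Proof.
  intros Ht0 HtU HUB Hmin. apply Rnot_lt_le; intros Hsmall.
  destruct cm_bounds as (Hccm & _ & Hcm1).
  assert (Hcm : 0 < cm) by lra.
  pose proof (p_pos t0 ltac:(lra)) as Hpt0.
  set (r := p t0 / cm).
  assert (Hr : r * cm = p t0) by (unfold r; field; lra).
  assert (Hr_gt : p t0 < r) by nra.
  destruct (IVT_interv (fun z => p z - r) t0 U) as [s [Hs Hps]]; try nra.
  { intros z Hz. apply continuity_pt_minus; [apply Hp_cont; lra | apply continuity_pt_cst]. }
  { destruct (Req_dec t0 U) as [<-|]; [nra | lra]. }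
  simpl in Hps.
  assert (Hst0 : t0 < s) by (destruct (Req_dec s t0) as [->|]; lra).
  set (m := gap t0).
  assert (Hder : forall z, a < z < B -> is_derive (fun z => chord z - m * ln (p z)) z
                                         (P z / p z * gap z - m * (P z / p z))).
  { intros z Hz. pose proof (p_pos z ltac:(lra)) as Hpz.
    apply (is_derive_minus (V:=R_NormedModule)); [apply chord_derive; lra|].
    apply is_derive_scal. exact (is_derive_comp ln p z _ _ (is_derive_ln _ Hpz) (Hp_der z Hz)). }
  assert (Hgrowth : chord t0 - m * ln (p t0) <= chord s - m * ln (p s)).
  { apply (le_of_derive_nonneg (fun z => chord z - m * ln (p z))
      (fun z => P z / p z * gap z - m * (P z / p z))); try lra.
    - intros z Hz. apply Hder; lra.
    - intros z Hz. exact (is_derive_continuity_pt _ _ _ (Hder z ltac:(lra))).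
    - intros z Hz. pose proof (p_pos z ltac:(lra)).
      assert (m <= gap z) by (apply Hmin; lra).
      assert (0 < P z / p z) by (apply Rdiv_lt_0_compat; [apply HP_pos|]; lra).
      nra. }
  assert (Hln : ln (p s) = ln (p t0) + ln (/ cm)).
  { rewrite <- ln_mult; [|lra | apply Rinv_0_lt_compat; lra]. f_equal. unfold r in Hps; lra. }
  pose proof ln_inv_cm_gt1.
  assert (chord s < slope t0).
  { apply chord_lt_slope; try lra. replace (p s) with r by lra. nra. }
  assert (0 < m) by (apply gap_pos; lra).
  unfold m, gap in *. nra.
Qed.

Lemma gap_bounded_below : exists m, 0 < m /\ forall t, a < t <= mid -> m <= gap t.
Proof.
  destruct cm_bounds as (Hccm & _ & Hcm1).
  assert (Hmid : a < mid < B) by (unfold mid; lra).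
  pose proof (p_pos mid ltac:(lra)).
  destruct (IVT_interv (fun z => p z - cm * p mid) a mid) as [tU [HtU HptU]];
    try (rewrite ?Hpa; nra).
  { intros z Hz. apply continuity_pt_minus; [apply Hp_cont; lra | apply continuity_pt_cst]. }
  simpl in HptU.
  assert (HatU : a < tU) by (destruct (Req_dec tU a) as [->|]; [rewrite Hpa in HptU; nra | lra]).
  destruct (continuity_ab_min gap tU mid) as [xm [Hxm Hxm_in]]; try lra.
  { intros; apply gap_cont; lra. }
  exists (gap xm). split; [apply gap_pos; lra|].
  intros t Ht. destruct (Rle_or_lt tU t); [apply Hxm; lra|].
  destruct (continuity_ab_min gap t mid) as [z [Hz Hz_in]]; try lra.
  { intros; apply gap_cont; lra. }
  destruct (Rle_or_lt tU z) as [HtUz|HztU].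
  - apply Rle_trans with (gap z); [apply Hxm | apply Hz]; lra.
  - exfalso.
    assert (p z < p tU) by (apply p_lt; lra).
    assert (cm * p mid <= p z) by (apply gap_minimizer_not_small; try lra; intros; apply Hz; lra).
    lra.
Qed.

(* Near [a] both slopes tend to the initial tangent slope [0], so the gap cannot stay above [m]. *)
Lemma positive_gap_absurd : False.
Proof.
  destruct gap_bounded_below as [m [Hm Hgap]].
  assert (Hslope_a : slope a = 0) by (unfold slope; rewrite HQa; unfold Rdiv; ring).
  destruct (continuity_pt_eps slope a (slope_cont a ltac:(lra)) (m / 3)) as [d [Hd Hslope]]; [lra|].
  set (t0 := Rmin mid (a + d / 2)).
  assert (Ht0 : a < t0 <= mid) by (unfold t0, mid; split; [apply Rmin_glb_lt|apply Rmin_l]; lra).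
  assert (Ht0d : t0 <= a + d / 2) by apply Rmin_r.
  assert (Hsmall : forall z, a <= z <= t0 -> Rabs (slope z) < m / 3).
  { intros z Hz. rewrite <- (Rminus_0_r (slope z)), <- Hslope_a.
    apply Hslope. rewrite Rabs_right; lra. }
  assert (Hq_t0 : Rabs (q t0 - q a) <= m / 3 * p t0 - m / 3 * p a).
  { unfold mid in *.
    apply (Rabs_sub_le_of_derive (fun z => m / 3 * p z) q (fun z => m / 3 * P z) Q); try lra.
    - intros z Hz. apply is_derive_scal, Hp_der; lra.
    - intros z Hz. apply Hq_der; lra.
    - intros z Hz. apply continuity_pt_mult; [apply continuity_pt_cst|apply Hp_cont; lra].
    - intros z Hz. apply Hq_cont; lra.
    - intros z Hz. specialize (HP_pos z ltac:(lra)). specialize (Hsmall z Hz).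
      replace (Q z) with (slope z * P z) by (unfold slope; field; lra).
      rewrite Rabs_mult, (Rabs_right (P z)) by lra. nra. }
  rewrite Hpa, Hqa, Rminus_0_r, Rmult_0_r, Rminus_0_r in Hq_t0.
  pose proof (p_pos t0 ltac:(unfold mid in *; lra)).
  assert (Hchord : Rabs (chord t0) <= m / 3).
  { unfold chord. rewrite Rabs_div, (Rabs_right (p t0)) by lra.
    apply (Rmult_le_reg_r (p t0)); auto. field_simplify; lra. }
  specialize (Hgap t0 Ht0). specialize (Hsmall t0 ltac:(lra)).
  apply Rabs_def2 in Hsmall. apply Rabs_le_between in Hchord.
  unfold gap in Hgap. lra.
Qed.

End PositiveGap.

End ChordTangent.

Lemma parallel_tangent_exists (a B c : R) (p q P Q : R -> R) :
  a < B -> 0 < c -> c * exp 1 < 1 ->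
  (forall t, a <= t <= B -> continuity_pt p t) ->
  (forall t, a <= t <= B -> continuity_pt q t) ->
  (forall t, a <= t <= B -> continuity_pt P t) ->
  (forall t, a <= t <= B -> continuity_pt Q t) ->
  (forall t, a < t < B -> is_derive p t (P t)) ->
  (forall t, a < t < B -> is_derive q t (Q t)) ->
  (forall t, a <= t <= B -> 0 < P t) ->
  p a = 0 -> q a = 0 -> Q a = 0 ->
  exists t xi, a < t < B /\ a < xi <= t /\ c * p t < p xi /\ Q xi * p t = q t * P xi.
Proof.
  intros HaB Hc Hce Hpc Hqc HPc HQc Hpd Hqd HP Hpa Hqa HQa.
  apply NNPP; intros Hnone.
  assert (Hno : forall t xi, a < t < B -> a < xi <= t -> c * p t < p xi ->
                  Q xi * p t <> q t * P xi) by (intros t xi ? ? ? ?; apply Hnone; eauto 10).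
  destruct (Rlt_or_le 0 (Q ((a + B) / 2) / P ((a + B) / 2) - q ((a + B) / 2) / p ((a + B) / 2)))
    as [Hpos|Hnonpos].
  - exact (positive_gap_absurd a B c p q P Q HaB Hc Hce Hpc Hqc HPc HQc Hpd Hqd HP Hpa Hqa HQa Hno Hpos).
  - (* Reflecting [q] reduces a negative gap to a positive one. *)
    assert (Hneq : Q ((a + B) / 2) / P ((a + B) / 2) - q ((a + B) / 2) / p ((a + B) / 2) <> 0)
      by (apply (gap_neq0 a B c p q P Q); auto; lra).
    apply (positive_gap_absurd a B c p (fun t => - q t) P (fun t => - Q t)); auto.
    + intros; apply continuity_pt_opp; auto.
    + intros; apply continuity_pt_opp; auto.
    + intros; apply (is_derive_opp (V:=R_NormedModule)); auto.
    + rewrite Hqa; ring.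
    + rewrite HQa; ring.
    + intros t xi ? ? ? Heq. apply (Hno t xi); auto. lra.
    + unfold Rdiv in *. lra.
Qed.

Lemma continuity_pt_lin_comb f g u v s : continuity_pt f s -> continuity_pt g s ->
  continuity_pt (fun s => u * f s + v * g s) s.
Proof.
  intros. apply continuity_pt_plus; apply continuity_pt_mult; auto;
    apply continuity_pt_cst.
Qed.

Lemma is_derive_lin_comb f g u v s df dg : is_derive f s df -> is_derive g s dg ->
  is_derive (fun s => u * f s + v * g s) s (u * df + v * dg).
Proof. intros. apply (is_derive_plus (V:=R_NormedModule)); apply is_derive_scal; auto. Qed.

Definition clamp (a b s : R) : R := Rmax a (Rmin b s).

Lemma clamp_in a b s : a <= b -> a <= clamp a b s <= b.
Proof. intros. unfold clamp, Rmax, Rmin; repeat destruct Rle_dec; lra. Qed.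

Lemma clamp_id a b s : a <= s <= b -> clamp a b s = s.
Proof. intros. unfold clamp, Rmax, Rmin; repeat destruct Rle_dec; lra. Qed.

Lemma clamp_lipschitz a b z s : a <= b -> Rabs (clamp a b z - clamp a b s) <= Rabs (z - s).
Proof.
  intros. unfold clamp, Rmax, Rmin; repeat destruct Rle_dec;
    unfold Rabs; repeat destruct Rcase_abs; lra.
Qed.

Lemma cont_on_eps a b g t : cont_on a b g t -> forall e, 0 < e ->
  exists d, 0 < d /\ forall y, in_Icc a b y -> Rabs (y - t) < d -> Rabs (g y - g t) < e.
Proof.
  intros H e He. destruct (proj1 (filterlim_locally _ _) H (mkposreal e He)) as [d Hd].
  exists d; split; [apply cond_pos|]. intros y Hy Hyd. now apply Hd.
Qed.

Lemma has_deriv_on_eps a b f t df : has_deriv_on a b f t df -> forall e, 0 < e ->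
  exists d, 0 < d /\ forall y, in_Icc a b y -> y <> t -> Rabs (y - t) < d ->
    Rabs ((f y - f t) / (y - t) - df) < e.
Proof.
  intros H e He. destruct (proj1 (filterlim_locally _ _) H (mkposreal e He)) as [d Hd].
  exists d; split; [apply cond_pos|]. intros y Hy Hne Hyd. now apply Hd.
Qed.

Lemma has_deriv_on_cont_eps a b f t df : has_deriv_on a b f t df -> forall e, 0 < e ->
  exists d, 0 < d /\ forall y, in_Icc a b y -> Rabs (y - t) < d -> Rabs (f y - f t) < e.
Proof.
  intros H e He. destruct (has_deriv_on_eps a b f t df H 1 Rlt_0_1) as [d [Hd Hquot]].
  set (K := Rabs df + 1).
  assert (HK : 0 < K) by (unfold K; pose proof (Rabs_pos df); lra).
  exists (Rmin d (e / K)); split; [apply Rmin_glb_lt; auto; apply Rdiv_lt_0_compat; lra|].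
  intros y Hy Hyd. destruct (Req_dec y t) as [->|Hne].
  { rewrite Rminus_eq_0, Rabs_R0; lra. }
  assert (Hyd1 : Rabs (y - t) < d) by (eapply Rlt_le_trans; [exact Hyd | apply Rmin_l]).
  assert (Hyd2 : Rabs (y - t) < e / K) by (eapply Rlt_le_trans; [exact Hyd | apply Rmin_r]).
  assert (Hq : Rabs ((f y - f t) / (y - t)) < K).
  { specialize (Hquot y Hy Hne Hyd1).
    pose proof (Rabs_triang_inv ((f y - f t) / (y - t)) df). unfold K; lra. }
  replace (f y - f t) with ((f y - f t) / (y - t) * (y - t)) by (field; lra).
  rewrite Rabs_mult.
  apply Rle_lt_trans with (K * Rabs (y - t)); [apply Rmult_le_compat_r; [apply Rabs_pos | lra]|].
  replace e with (K * (e / K)) by (field; lra). apply Rmult_lt_compat_l; auto.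
Qed.

(* Extending [f] by constants outside [[a, b]] turns one-sided regularity on [[a, b]]
   into the two-sided notions used by Stdlib's MVT, IVT and extreme value theorems. *)
Lemma clamp_continuity_pt a b f : a <= b ->
  (forall t, in_Icc a b t -> forall e, 0 < e ->
    exists d, 0 < d /\ forall y, in_Icc a b y -> Rabs (y - t) < d -> Rabs (f y - f t) < e) ->
  forall s, continuity_pt (fun s => f (clamp a b s)) s.
Proof.
  intros Hab H s e He.
  destruct (H (clamp a b s) (clamp_in a b s Hab) e He) as [d [Hd Hfd]].
  exists d; split; auto. intros y [_ Hy]. apply Hfd; [apply clamp_in; auto|].
  eapply Rle_lt_trans; [apply clamp_lipschitz; auto | exact Hy].
Qed.

Lemma clamp_is_derive a b f t df : a < t < b -> has_deriv_on a b f t df ->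
  is_derive (fun s => f (clamp a b s)) t df.
Proof.
  intros Ht H. apply is_derive_Reals. intros e He.
  destruct (has_deriv_on_eps a b f t df H e He) as [d [Hd Hquot]].
  assert (Hpos : 0 < Rmin d (Rmin (t - a) (b - t))) by (repeat apply Rmin_glb_lt; lra).
  exists (mkposreal _ Hpos). intros h Hh Hhd. simpl in Hhd.
  apply Rmin_Rgt in Hhd as [Hhd Hhab]. apply Rmin_Rgt in Hhab as [Hha Hhb].
  apply Rabs_def2 in Hha. apply Rabs_def2 in Hhb.
  rewrite (clamp_id a b (t + h)), (clamp_id a b t) by lra.
  replace h with (t + h - t) at 2 by ring.
  apply Hquot; unfold in_Icc; [lra | lra |]. replace (t + h - t) with h by ring. lra.
Qed.

Lemma collinear_of_cross_eq0 u1 u2 v1 v2 : u1 * v2 - u2 * v1 = 0 -> (v1 <> 0 \/ v2 <> 0) ->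
  collinear u1 u2 v1 v2.
Proof.
  intros H Hv. destruct (Req_dec v1 0) as [Hv1|Hv1].
  - exists v2, (- u2). split; [tauto|]. subst. split; nra.
  - exists v1, (- u1). split; [tauto|]. split; nra.
Qed.

Section Curve.
Variables (a b : R) (x y dx dy : R -> R).
Hypothesis Hab : a < b.
Hypothesis Hdx : forall t, in_Icc a b t -> has_deriv_on a b x t (dx t).
Hypothesis Hdy : forall t, in_Icc a b t -> has_deriv_on a b y t (dy t).
Hypothesis Hcdx : forall t, in_Icc a b t -> cont_on a b dx t.
Hypothesis Hcdy : forall t, in_Icc a b t -> cont_on a b dy t.
Hypothesis Hreg : forall t, in_Icc a b t -> dx t <> 0 \/ dy t <> 0.

Let X s := x (clamp a b s) - x a.
Let Y s := y (clamp a b s) - y a.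
Let DX s := dx (clamp a b s).
Let DY s := dy (clamp a b s).
Let speed s := sqrt (DX s ^ 2 + DY s ^ 2).
Let L t := RInt speed a t.

Lemma DX_cont s : continuity_pt DX s.
Proof. apply (clamp_continuity_pt a b dx); [lra|]. intros; apply cont_on_eps; auto. Qed.

Lemma DY_cont s : continuity_pt DY s.
Proof. apply (clamp_continuity_pt a b dy); [lra|]. intros; apply cont_on_eps; auto. Qed.

Lemma X_cont s : continuity_pt X s.
Proof.
  apply continuity_pt_minus; [|apply continuity_pt_cst].
  apply (clamp_continuity_pt a b x); [lra|]. intros; eapply has_deriv_on_cont_eps; eauto.
Qed.

Lemma Y_cont s : continuity_pt Y s.
Proof.
  apply continuity_pt_minus; [|apply continuity_pt_cst].
  apply (clamp_continuity_pt a b y); [lra|]. intros; eapply has_deriv_on_cont_eps; eauto.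
Qed.

Lemma X_derive t : a < t < b -> is_derive X t (DX t).
Proof.
  intros. unfold DX. rewrite (clamp_id a b t), <- Rminus_0_r by lra.
  apply (is_derive_minus (V:=R_NormedModule)); [|exact (is_derive_const (V:=R_NormedModule) _ _)].
  apply clamp_is_derive, Hdx; auto. unfold in_Icc; lra.
Qed.

Lemma Y_derive t : a < t < b -> is_derive Y t (DY t).
Proof.
  intros. unfold DY. rewrite (clamp_id a b t), <- Rminus_0_r by lra.
  apply (is_derive_minus (V:=R_NormedModule)); [|exact (is_derive_const (V:=R_NormedModule) _ _)].
  apply clamp_is_derive, Hdy; auto. unfold in_Icc; lra.
Qed.

Lemma speed_pos s : 0 < speed s.
Proof.
  apply sqrt_lt_R0. unfold DX, DY.
  destruct (Hreg (clamp a b s) (clamp_in a b s ltac:(lra))); nra.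
Qed.

Lemma speed_cont s : continuity_pt speed s.
Proof.
  assert (Hsq : forall f, continuity_pt f s -> continuity_pt (fun s => f s ^ 2) s).
  { intros f Hf. apply (continuity_pt_mult f (fun s => f s ^ 1)); auto.
    apply (continuity_pt_mult f (fun _ => 1)); auto. apply continuity_pt_cst. }
  apply (continuity_pt_comp (fun s => DX s ^ 2 + DY s ^ 2) sqrt).
  - apply continuity_pt_plus; apply Hsq; auto using DX_cont, DY_cont.
  - apply continuity_pt_sqrt. nra.
Qed.

Lemma L_derive t : is_derive L t (speed t).
Proof.
  apply (is_derive_RInt speed L a t); [|apply continuity_pt_filterlim, speed_cont].
  apply filter_forall. intros u. apply (RInt_correct (V:=R_CompleteNormedModule)).
  apply (ex_RInt_continuous (V:=R_CompleteNormedModule)).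
  intros z _. apply continuity_pt_filterlim, speed_cont.
Qed.

Lemma L_cont t : continuity_pt L t.
Proof. exact (is_derive_continuity_pt _ _ _ (L_derive t)). Qed.

Lemma L_a : L a = 0.
Proof. apply (RInt_point (V:=R_CompleteNormedModule)). Qed.

Lemma L_lt u v : u < v -> L u < L v.
Proof.
  intros. apply (lt_of_derive_pos L speed); auto; intros; auto using L_derive, L_cont, speed_pos.
Qed.

Lemma L_le u v : u <= v -> L u <= L v.
Proof. intros. destruct (Req_dec u v) as [->|]; [lra|]. left; apply L_lt; lra. Qed.

Lemma arclen_eq t : a <= t <= b -> arclen dx dy a t = L t.
Proof.
  intros Ht. apply RInt_ext. intros z Hz.
  rewrite Rmin_left, Rmax_right in Hz by lra.
  unfold speed, DX, DY. rewrite clamp_id by lra. reflexivity.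
Qed.

Lemma arclen_pos t : a < t <= b -> 0 < arclen dx dy a t.
Proof. intros. rewrite arclen_eq, <- L_a by lra. apply L_lt; lra. Qed.

Lemma supLT_cases t : a < t <= b ->
  (supLT x y dx dy a t = m_infty /\ forall xi, ~ Tset x y dx dy a t xi) \/
  (exists S, supLT x y dx dy a t = Finite S /\ S <= arclen dx dy a t /\
     forall xi, Tset x y dx dy a t xi -> arclen dx dy a xi <= S).
Proof.
  intros Ht. unfold supLT.
  set (E := fun r => exists tau, Tset x y dx dy a t tau /\ r = arclen dx dy a tau).
  destruct (Lub_Rbar_correct E) as [Hub Hlub].
  assert (Hle : Rbar_le (Lub_Rbar E) (arclen dx dy a t)).
  { apply Hlub. intros r [tau [[Htau _] ->]]. simpl.
    rewrite !arclen_eq by lra. apply L_le; lra. }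
  destruct (classic (exists xi, Tset x y dx dy a t xi)) as [[xi Hxi]|Hnone].
  - right. assert (Hxi_le : Rbar_le (arclen dx dy a xi) (Lub_Rbar E)) by (apply Hub; now exists xi).
    destruct (Lub_Rbar E) as [S| |]; simpl in Hxi_le, Hle; try contradiction.
    exists S; repeat split; auto. intros xi' Hxi'. apply (Hub (arclen dx dy a xi')). now exists xi'.
  - left. split; [|intros xi Hxi; apply Hnone; now exists xi].
    assert (Hm : Rbar_le (Lub_Rbar E) m_infty).
    { apply Hlub. intros r [tau [Htau _]]. exfalso; apply Hnone; now exists tau. }
    destruct (Lub_Rbar E); simpl in Hm; tauto.
Qed.

Let e1 := dx a.
Let e2 := dy a.
Let n := e1 ^ 2 + e2 ^ 2.
Let p s := e1 * X s + e2 * Y s.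
Let q s := - e2 * X s + e1 * Y s.
Let P s := e1 * DX s + e2 * DY s.
Let Q s := - e2 * DX s + e1 * DY s.

Lemma n_pos : 0 < n.
Proof. destruct (Hreg a ltac:(unfold in_Icc; lra)); unfold n, e1, e2; nra. Qed.

Lemma p_a : p a = 0.
Proof. unfold p, X, Y. rewrite clamp_id by lra. ring. Qed.

Lemma q_a : q a = 0.
Proof. unfold q, X, Y. rewrite clamp_id by lra. ring. Qed.

Lemma P_a : P a = n.
Proof. unfold P, DX, DY. rewrite clamp_id by lra. unfold n, e1, e2. ring. Qed.

Lemma Q_a : Q a = 0.
Proof. unfold Q, DX, DY. rewrite clamp_id by lra. unfold e1, e2. ring. Qed.

Lemma p_derive t : a < t < b -> is_derive p t (P t).
Proof. intros. apply is_derive_lin_comb; [apply X_derive | apply Y_derive]; auto. Qed.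

Lemma q_derive t : a < t < b -> is_derive q t (Q t).
Proof. intros. apply is_derive_lin_comb; [apply X_derive | apply Y_derive]; auto. Qed.

Lemma rotated_speed s : sqrt n * speed s = sqrt (P s ^ 2 + Q s ^ 2).
Proof.
  unfold speed. rewrite <- sqrt_mult_alt by (pose proof n_pos; lra).
  f_equal. unfold n, P, Q. ring.
Qed.

Lemma P_le_speed s : P s <= sqrt n * speed s.
Proof.
  rewrite rotated_speed. apply Rle_trans with (Rabs (P s)); [apply Rle_abs|].
  rewrite <- sqrt_Rsqr_abs. apply sqrt_le_1_alt. unfold Rsqr. nra.
Qed.

Lemma speed_le_P_near_a rho : 1 < rho ->
  exists d, 0 < d /\ forall s, a <= s <= a + d -> 0 < P s /\ sqrt n * speed s <= rho * P s.
Proof.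
  intros Hrho. pose proof n_pos. set (th := (rho - 1) * n / 2).
  destruct (continuity_pt_eps P a (continuity_pt_lin_comb _ _ _ _ _ (DX_cont a) (DY_cont a))
              (n / 2)) as [d1 [Hd1 HP1]]; [lra|].
  destruct (continuity_pt_eps Q a (continuity_pt_lin_comb _ _ _ _ _ (DX_cont a) (DY_cont a))
              th) as [d2 [Hd2 HQ2]]; [unfold th; nra|].
  exists (Rmin d1 d2 / 2). split; [assert (0 < Rmin d1 d2) by (apply Rmin_glb_lt; lra); lra|].
  intros s Hs. pose proof (Rmin_l d1 d2). pose proof (Rmin_r d1 d2).
  specialize (HP1 s ltac:(rewrite Rabs_right; lra)). rewrite P_a in HP1.
  specialize (HQ2 s ltac:(rewrite Rabs_right; lra)). rewrite Q_a, Rminus_0_r in HQ2.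
  apply Rabs_def2 in HP1. apply Rabs_def2 in HQ2.
  split; [lra|]. rewrite rotated_speed, <- (sqrt_pow2 (rho * P s)) by nra.
  apply sqrt_le_1_alt.
  assert (th < (rho - 1) * P s) by (unfold th; nra).
  assert (Q s ^ 2 <= ((rho - 1) * P s) ^ 2) by nra.
  nra.
Qed.

Lemma arclen_sandwich B rho : a <= B < b ->
  (forall s, a <= s <= B -> sqrt n * speed s <= rho * P s) ->
  forall u, a <= u <= B -> p u <= sqrt n * L u <= rho * p u.
Proof.
  intros HB Hnear u Hu.
  assert (Hp_cont : forall s, continuity_pt p s)
    by (intros; apply continuity_pt_lin_comb; auto using X_cont, Y_cont).
  assert (Hk_cont : forall s, continuity_pt (fun s => sqrt n * L s) s)
    by (intros; apply continuity_pt_mult; auto using L_cont; apply continuity_pt_cst).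
  split.
  - assert (sqrt n * L a - p a <= sqrt n * L u - p u); [|rewrite L_a, p_a in *; lra].
    apply (le_of_derive_nonneg (fun s => sqrt n * L s - p s) (fun s => sqrt n * speed s - P s)); try lra.
    + intros s Hs. apply (is_derive_minus (V:=R_NormedModule));
        [apply is_derive_scal, L_derive | apply p_derive; lra].
    + intros s Hs. apply continuity_pt_minus; auto.
    + intros s Hs. pose proof (P_le_speed s). lra.
  - assert (rho * p a - sqrt n * L a <= rho * p u - sqrt n * L u); [|rewrite L_a, p_a in *; lra].
    apply (le_of_derive_nonneg (fun s => rho * p s - sqrt n * L s)
      (fun s => rho * P s - sqrt n * speed s)); try lra.
    + intros s Hs. apply (is_derive_minus (V:=R_NormedModule));
        [apply is_derive_scal, p_derive; lra | apply is_derive_scal, L_derive].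
    + intros s Hs. apply continuity_pt_minus; auto.
      apply continuity_pt_mult; auto. apply continuity_pt_cst.
    + intros s Hs. specialize (Hnear s ltac:(lra)). lra.
Qed.

Lemma Tset_of_parallel t xi : a < t <= b -> a < xi <= t -> 0 < p t ->
  Q xi * p t = q t * P xi -> Tset x y dx dy a t xi.
Proof.
  intros Ht Hxi Hpt Hpar. split; [lra|]. pose proof n_pos.
  assert (Hcross : DY xi * X t - DX xi * Y t = 0).
  { assert (Q xi * p t - q t * P xi = n * (DY xi * X t - DX xi * Y t)) by (unfold Q, P, p, q, n; ring).
    apply (Rmult_eq_reg_l n); nra. }
  unfold DX, DY, X, Y in Hcross. rewrite !clamp_id in Hcross by lra.
  apply collinear_of_cross_eq0; [lra|].
  destruct (Req_dec (x t - x a) 0) as [Hx0|]; [right|left; auto]. intros Hy0.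
  unfold p, X, Y in Hpt. rewrite clamp_id in Hpt by lra. rewrite Hx0, Hy0 in Hpt. lra.
Qed.

(* Near [a] the arc length is comparable, up to the factor [rho = c1 / c], to the projection
   [p] on the initial tangent, so a parallel tangent with [p xi > c1 p t] has [L xi > c L t]. *)
Lemma arclen_ratio_attained delta c : 0 < delta -> 0 < c -> c < / exp 1 ->
  exists t xi, a < t < Rmin b (a + delta) /\ Tset x y dx dy a t xi /\
    c * arclen dx dy a t < arclen dx dy a xi.
Proof.
  intros Hdelta Hc Hce. pose proof exp1_gt1.
  set (c1 := (c + / exp 1) / 2). set (rho := c1 / c).
  assert (Hrho : 1 < rho)
    by (unfold rho; apply (Rmult_lt_reg_r c); auto; field_simplify; unfold c1; lra).
  assert (Hc1e : c1 * exp 1 < 1).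
  { assert (/ exp 1 * exp 1 = 1) by (apply Rinv_l; lra).
    assert (c1 < / exp 1) by (unfold c1; lra). nra. }
  destruct (speed_le_P_near_a rho Hrho) as [d [Hd Hnear]].
  set (m := Rmin (Rmin delta (b - a)) d).
  assert (Hm : 0 < m) by (unfold m; repeat apply Rmin_glb_lt; lra).
  assert (Hm_le : m <= delta /\ m <= b - a /\ m <= d).
  { unfold m. pose proof (Rmin_l (Rmin delta (b - a)) d). pose proof (Rmin_r (Rmin delta (b - a)) d).
    pose proof (Rmin_l delta (b - a)). pose proof (Rmin_r delta (b - a)). lra. }
  set (B := a + m / 2).
  assert (HB : a < B) by (unfold B; lra).
  assert (HBb : B < b) by (unfold B; lra).
  destruct (parallel_tangent_exists a B c1 p q P Q) as (t & xi & Ht & Hxi & Hgrow & Hpar);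
    auto using p_a, q_a, Q_a; try (unfold c1; lra).
  all: try (intros; apply continuity_pt_lin_comb; auto using X_cont, Y_cont, DX_cont, DY_cont).
  all: try (intros s Hs; apply Hnear; unfold B in *; lra).
  { intros; apply p_derive; lra. }
  { intros; apply q_derive; lra. }
  assert (Hpt : 0 < p t).
  { rewrite <- p_a. apply (lt_of_derive_pos p P); try lra.
    - intros; apply p_derive; lra.
    - intros; apply continuity_pt_lin_comb; auto using X_cont, Y_cont.
    - intros s Hs; apply Hnear; unfold B in *; lra. }
  exists t, xi. split; [split; [lra | apply Rmin_glb_lt; unfold B in *; lra]|].
  split; [apply Tset_of_parallel; auto; lra|].
  rewrite !arclen_eq by lra.
  assert (Hsw : forall u, a <= u <= B -> p u <= sqrt n * L u <= rho * p u).
  { apply arclen_sandwich; [lra|]. intros s Hs; apply Hnear; unfold B in *; lra. }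
  destruct (Hsw xi ltac:(lra)). destruct (Hsw t ltac:(lra)).
  pose proof (sqrt_lt_R0 n n_pos).
  assert (rho * c = c1) by (unfold rho; field; lra).
  apply (Rmult_lt_reg_l (sqrt n)); auto. nra.
Qed.

Lemma ratio_le_1 t r : a < t <= b ->
  Rbar_div (supLT x y dx dy a t) (arclen dx dy a t) = Finite r -> r <= 1.
Proof.
  intros Ht Hr. pose proof (arclen_pos t Ht) as HL. 
  destruct (supLT_cases t Ht) as [[Hm _]|(S & HS & HSL & _)]; rewrite ?Hm, ?HS in Hr.
  - unfold Rbar_div in Hr. rewrite (is_Rbar_mult_unique _ _ m_infty) in Hr; [discriminate|].
    apply is_Rbar_mult_m_infty_pos. simpl. apply Rinv_0_lt_compat; lra.
  - simpl in Hr. injection Hr as <-.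
    rewrite <- (Rinv_r (arclen dx dy a t)) by lra.
    apply Rmult_le_compat_r; [left; apply Rinv_0_lt_compat|]; lra.
Qed.

Lemma ratio_ge_of_Tset t xi : a < t <= b -> Tset x y dx dy a t xi ->
  exists r, Rbar_div (supLT x y dx dy a t) (arclen dx dy a t) = Finite r /\
    arclen dx dy a xi <= r * arclen dx dy a t.
Proof.
  intros Ht HT. pose proof (arclen_pos t Ht) as HL.
  destruct (supLT_cases t Ht) as [[_ Hnone]|(S & HS & _ & Hub)]; [exfalso; exact (Hnone xi HT)|].
  exists (S / arclen dx dy a t). split; [rewrite HS; reflexivity|].
  replace (S / arclen dx dy a t * arclen dx dy a t) with S by (field; lra). auto.
Qed.

End Curve.

Lemma Rbar_lt_exists_pos_between (z : Rbar) u : 0 < u -> Rbar_lt z u ->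
  exists c, 0 < c < u /\ Rbar_lt z c.
Proof.
  intros Hu Hz. destruct z as [l| |]; simpl in Hz; try contradiction.
  - pose proof (Rmax_l l 0). pose proof (Rmax_r l 0).
    assert (Rmax l 0 < u) by (apply Rmax_lub_lt; lra).
    exists ((Rmax l 0 + u) / 2). simpl; lra.
  - exists (u / 2). simpl; lra.
Qed.

Theorem corollary2 (a b : R) (x y dx dy : R -> R) :
  a < b ->
  (forall t, in_Icc a b t -> has_deriv_on a b x t (dx t)) ->
  (forall t, in_Icc a b t -> has_deriv_on a b y t (dy t)) ->
  (forall t, in_Icc a b t -> cont_on a b dx t) ->
  (forall t, in_Icc a b t -> cont_on a b dy t) ->
  (forall t, in_Icc a b t -> dx t <> 0 \/ dy t <> 0) ->
  Rbar_le (Finite (/ exp 1))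
    (limsup_right
       (fun t => Rbar_div (supLT x y dx dy a t) (arclen dx dy a t)) a b).
Proof.
  intros Hab Hdx Hdy Hcdx Hcdy Hreg. unfold limsup_right.
  apply Glb_Rbar_correct. intros s [delta [Hdelta ->]].
  set (E := fun r => exists t, a < t < Rmin b (a + delta) /\
              Finite r = Rbar_div (supLT x y dx dy a t) (arclen dx dy a t)).
  assert (Hin : forall t, a < t < Rmin b (a + delta) -> a < t <= b)
    by (intros t Ht; pose proof (Rmin_l b (a + delta)); lra).
  assert (Hle1 : Rbar_le (Lub_Rbar E) 1).
  { apply (proj2 (Lub_Rbar_correct E)). intros r [t [Ht Hr]].
    exact (ratio_le_1 a b x y dx dy Hab Hcdx Hcdy Hreg t r (Hin t Ht) (eq_sym Hr)). }
  assert (Hge : Rbar_le (/ exp 1) (Lub_Rbar E)).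
  { apply Rbar_not_lt_le. intros Hlt.
    destruct (Rbar_lt_exists_pos_between _ _ (Rinv_0_lt_compat _ (exp_pos 1)) Hlt) as (c & Hc & Hsup).
    destruct (arclen_ratio_attained a b x y dx dy Hab Hdx Hdy Hcdx Hcdy Hreg delta c)
      as (t & xi & Ht & HT & Hbig); try lra.
    destruct (ratio_ge_of_Tset a b x y dx dy Hab Hcdx Hcdy Hreg t xi (Hin t Ht) HT) as (r & Hr & Hxi).
    assert (Hrc : Rbar_lt r c).
    { apply Rbar_le_lt_trans with (Lub_Rbar E); [|exact Hsup].
      apply (proj1 (Lub_Rbar_correct E)). exists t. split; [exact Ht | now rewrite Hr]. }
    pose proof (arclen_pos a b dx dy Hab Hcdx Hcdy Hreg t (Hin t Ht)).
    simpl in Hrc. nra. }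
  destruct (Lub_Rbar E); simpl in *; tauto.
Qed.
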